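(* There are $2^{\mathfrak{c}}$ ideals on $\omega$ that are both meager and null and that are mutually incompatible both in $(\mathfrak{M},\supseteq)$ and in $(\mathfrak{N},\supseteq)$. In particular, neither $(\mathfrak{M},\supseteq)$ nor $(\mathfrak{N},\supseteq)$ has the BT-property.
   Context: All ideals on $\omega$ considered are proper and contain all finite subsets of $\omega$; they are viewed as subsets of the Cantor space $2^\omega=\mathcal{P}(\omega)$. $\mathfrak{M}$ (resp. $\mathfrak{N}$) is the set of ideals that are meager (resp. Lebesgue null) subsets of $2^\omega$, ordered by reverse inclusion; two ideals are compatible in such an ordering if some ideal of the class contains both. An ordering $P$ has the BT-property if it contains a dense subset $D$ that is atomless (every element of $D$ has two incompatible elements of $D$ below it), $\sigma$-closed (every countable decreasing sequence in $D$ has a lower bound in $D$) and satisfies $|D|\leq\mathfrak{c}$. *)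

From HB Require Import structures.
From mathcomp Require Import all_boot all_order all_algebra.
From mathcomp Require Import all_classical all_reals topology cantor.
Set Implicit Arguments. Unset Strict Implicit. Unset Printing Implicit Defensive.
Import Order.TTheory GRing.Theory Num.Theory.
Local Open Scope classical_set_scope.
Local Open Scope ring_scope.
Local Open Scope card_scope.

(* The Cantor space 2^omega = P(omega): a subset X of omega corresponds to its
   characteristic function. *)
Definition set_of_pt (x : cantor_space) : set nat := [set n | x n = true].

Definition as_cantor (I : set (set nat)) : set cantor_space :=
  [set x | I (set_of_pt x)].

Definition is_ideal (I : set (set nat)) : Prop :=
  [/\ ~ I setT,
      (forall A : set nat, finite_set A -> I A),
      (forall A B : set nat, A `<=` B -> I B -> I A) &
      (forall A B : set nat, I A -> I B -> I (A `|` B))].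

Definition nowhere_dense (T : topologicalType) (A : set T) : Prop :=
  (closure A)° = set0.

Definition meager (T : topologicalType) (A : set T) : Prop :=
  exists N : nat -> set T, (forall n, nowhere_dense (N n)) /\
                           A `<=` \bigcup_n N n.

Definition cylinder (s : seq bool) : set cantor_space :=
  [set x | forall i : nat, (i < size s)%N -> x i = nth false s i].

(* Lebesgue (fair-coin product measure) null subsets of 2^omega: for every
   eps = 1/(k+1) > 0, A is covered by countably many cylinders of total
   measure (sum of 2^-|s_n|) at most eps. *)
Definition null_set (A : set cantor_space) : Prop :=
  forall k : nat, exists s : nat -> seq bool,
    A `<=` \bigcup_n cylinder (s n) /\
    forall N : nat, \sum_(n < N) ((2%:R : rat) ^- size (s n)) <= (k.+1%:R)^-1.

Definition meager_ideals : set (set (set nat)) :=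
  [set I | is_ideal I /\ meager (as_cantor I)].
Definition null_ideals : set (set (set nat)) :=
  [set I | is_ideal I /\ null_set (as_cantor I)].

Definition compatible_in (C : set (set (set nat))) (I J : set (set nat)) : Prop :=
  exists K, C K /\ I `<=` K /\ J `<=` K.

(* BT-property of the ordering (C, reverse inclusion): p <= q iff q `<=` p. *)
Definition BT_property (C : set (set (set nat))) : Prop :=
  exists D : set (set (set nat)),
    [/\ D `<=` C,
        (forall p, C p -> exists2 d, D d & p `<=` d),
        (* atomless *)
        (forall d, D d -> exists d1 d2, [/\ D d1, D d2, d `<=` d1, d `<=` d2 &
                                          ~ compatible_in C d1 d2]),
        (* sigma-closed *)
        (forall s : nat -> set (set nat), (forall n, D (s n)) ->
           (forall n, s n `<=` s n.+1) ->
           exists2 d, D d & forall n, s n `<=` d) &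
        D #<= [set: set nat]].

From HB Require Import structures.
From mathcomp Require Import all_boot all_order all_algebra.
From mathcomp Require Import all_classical all_reals topology cantor.
From mathcomp Require Import zify ring.
Set Implicit Arguments. Unset Strict Implicit. Unset Printing Implicit Defensive.
Import Order.TTheory GRing.Theory Num.Theory.
Local Open Scope classical_set_scope.

(* Partition omega into the dyadic blocks [2^q, 2^(q+1)), i.e. the level sets of
   [trunc_log 2].  Every X ⊆ omega selects a set of blocks, the coding being such that
   for finitely many distinct X_1, ..., X_m and any prescribed truth values, all the
   blocks q of some arithmetic progression satisfy "X_i selects q iff the value for
   X_i is true" simultaneously.  For T ⊆ P(omega), let I_T be the ideal generated by
   the finite sets and, for every X, by the union of the blocks that X does not
   select if X ∈ T, and of those it selects otherwise.  Each member of I_T misses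
   every block of an arithmetic progression; hence I_T is proper, lies in a
   countable union of nowhere dense sets, and is null since the q-th block carries
   measure 2^(-2^q).  If X ∈ T but X ∉ T', the two generators attached to X cover
   omega, so I_T and I_T' are incompatible in any class of ideals.  This gives 2^c
   pairwise incompatible ideals, while a dense set of size at most c would have to
   contain pairwise distinct extensions of all of them, contradicting Cantor's
   theorem. *)

Definition ideal_gen (I : eqType) (g : I -> set nat) : set (set nat) :=
  [set A | exists (s : seq I) (N : nat),
     forall p, (N <= p)%N -> A p -> exists2 i, i \in s & g i p].

Section IdealGen.
Variables (I : eqType) (g : I -> set nat).

Lemma ideal_gen_generator i : ideal_gen g (g i).
Proof. by exists [:: i], 0 => p _ gip; exists i; rewrite ?mem_head. Qed.

Lemma ideal_gen_finite A : finite_set A -> ideal_gen g A.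
Proof.
move=> /finite_seqP[s ->]; exists [::], (\max_(p <- s) p).+1 => p.
by rewrite ltnNge => /negP + sp; case; apply: leq_bigmax_seq.
Qed.

Lemma ideal_gen_subset A B : A `<=` B -> ideal_gen g B -> ideal_gen g A.
Proof. by move=> AB [s [N gB]]; exists s, N => p pN /AB; exact: gB. Qed.

Lemma ideal_gen_setU A B : ideal_gen g A -> ideal_gen g B -> ideal_gen g (A `|` B).
Proof.
move=> [s [N gA]] [t [M gB]]; exists (s ++ t), (maxn N M) => p.
rewrite geq_max => /andP[pN pM] [/(gA _ pN)|/(gB _ pM)] [i it gip];
  by exists i; rewrite // mem_cat it ?orbT.
Qed.

Lemma is_ideal_gen : ~ ideal_gen g setT -> is_ideal (ideal_gen g).
Proof.
by split; [|exact: ideal_gen_finite|exact: ideal_gen_subset|exact: ideal_gen_setU].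
Qed.

End IdealGen.

Lemma not_compatible_in_cover (C : set (set (set nat))) (I J : set (set nat)) A B :
  C `<=` is_ideal -> I A -> J B -> A `|` B = setT -> ~ compatible_in C I J.
Proof.
move=> Cideal IA JB ABT [K [/Cideal [Kproper _ _ KU] [IK JK]]].
by apply: Kproper; rewrite -ABT; apply: KU; [exact: IK|exact: JK].
Qed.

Definition bit (n j : nat) : bool := odd (n %/ 2 ^ j).

Fixpoint nat_of_bits (s : seq bool) : nat :=
  if s is b :: s' then b + (nat_of_bits s').*2 else 0.

Lemma nat_of_bits_lt s : (nat_of_bits s < 2 ^ size s)%N.
Proof. by elim: s => [|b s IH] //=; rewrite expnS; case: b => /=; lia. Qed.

Lemma nat_of_bits_inj s t : size s = size t -> nat_of_bits s = nat_of_bits t -> s = t.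
Proof.
elim: s t => [|b s IH] [|c t] //= [st] bst.
have bc : b = c by move: (congr1 odd bst); rewrite !oddD !odd_double !addbF !oddb.
subst c; congr (_ :: _); apply: IH => //.
by move/eqP: bst; rewrite eqn_add2l => /eqP/(congr1 half); rewrite !doubleK.
Qed.

Lemma bit_expnMl l m j : bit (2 ^ l * m) (l + j) = bit m j.
Proof. by rewrite /bit expnD divnMl ?expn_gt0. Qed.

Lemma bit_nat_of_bits s k c : (c < size s)%N ->
  bit (nat_of_bits s + 2 ^ size s * k) c = nth false s c.
Proof.
elim: s c => [//|b s IH] [|c] /= cs; rewrite /bit expnS -mulnA mul2n -addnA -doubleD.
  by rewrite expn0 divn1 oddD odd_double addbF; case: b.
by rewrite expnS divnMA divn2 half_bit_double; exact: IH.
Qed.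

Lemma filter_forall_seq (T : eqType) (U : Type) (F : set_system U) (s : seq T)
    (P : T -> U -> Prop) : Filter F ->
  (forall x, x \in s -> \forall u \near F, P x u) ->
  \forall u \near F, forall x, x \in s -> P x u.
Proof.
move=> FF; elim: s => [|y s IH] Ps; first exact: nearW.
apply: filterS (filterI (Ps y (mem_head y s)) (IH _)).
  by move=> u [Pyu Psu] x; rewrite inE => /predU1P[->|]; [|exact: Psu].
by move=> x xs; apply: Ps; rewrite inE xs orbT.
Qed.

Lemma neq_set_asbool (U : Type) (A B : set U) : A <> B -> exists x, `[< A x >] != `[< B x >].
Proof.
apply: contra_notP => /forallNP eqAB; apply/funext => x.
by rewrite -[A x]asboolE -[B x]asboolE; have /negP := eqAB x; rewrite negbK => /eqP ->.
Qed.

Definition code (X : set nat) (l : nat) : nat :=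
  nat_of_bits (mkseq (fun i => `[< X i >]) l).

Lemma code_lt X l : (code X l < 2 ^ l)%N.
Proof. by have := nat_of_bits_lt (mkseq (fun i => `[< X i >]) l); rewrite size_mkseq. Qed.

Lemma code_separates X Y : \forall l \near \oo, code X l = code Y l -> X = Y.
Proof.
have [->|XY] := pselect (X = Y); first exact: nearW.
have [i XYi] := neq_set_asbool XY.
exists i.+1 => // l /= il /nat_of_bits_inj; rewrite !size_mkseq => /(_ erefl).
by move/(congr1 (nth false ^~ i)); rewrite !nth_mkseq // => eXY; rewrite eXY eqxx in XYi.
Qed.

Lemma code_inj_near (Xs : seq (set nat)) :
  \forall l \near \oo, {in Xs &, injective (code^~ l)}.
Proof.
have sep : \forall l \near \oo, forall X, X \in Xs -> forall Y, Y \in Xs ->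
    code X l = code Y l -> X = Y.
  apply: filter_forall_seq => X _.
  by apply: filter_forall_seq => Y _; exact: code_separates.
by apply: filterS sep => l sep X Y XXs YXs; exact: sep.
Qed.

(* For q = 2^l (2r+1), X selects q iff the bit of r of index [code X l] is set, where
   [code X l] is the binary code of X ∩ [0, l). *)
Definition selected (X : set nat) (q : nat) : bool :=
  bit q (logn 2 q + 1 + code X (logn 2 q)).

Definition block_index (l : nat) (s : seq bool) (k : nat) : nat :=
  2 ^ l * (nat_of_bits s + 2 ^ size s * k).*2.+1.

Lemma logn2_block_index l s k : logn 2 (block_index l s k) = l.
Proof.
rewrite /block_index lognM ?expn_gt0 // lognX logn_prime // eqxx muln1.
by rewrite logn_coprime ?addn0 // coprime2n /= odd_double.
Qed.

Lemma selected_block_index X l s k : (code X l < size s)%N ->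
  selected X (block_index l s k) = nth false s (code X l).
Proof.
move=> Xs; rewrite /selected logn2_block_index /block_index -addnA bit_expnMl.
by rewrite /bit add1n expnS divnMA divn2 /= uphalf_double -/(bit _ _) bit_nat_of_bits.
Qed.

Lemma block_indexD l s k n :
  block_index l s (k + n) = block_index l s k + n * 2 ^ (l + size s).+1.
Proof. by rewrite /block_index expnS expnD -!mul2n; ring. Qed.

Lemma leq_block_index l s k : (k <= block_index l s k)%N.
Proof.
have le_k : (k <= nat_of_bits s + 2 ^ size s * k)%N.
  exact: leq_trans (leq_pmull k (expn_gt0 2 _)) (leq_addl _ _).
rewrite /block_index; apply: leq_trans (leq_pmull _ (expn_gt0 2 l)).
by rewrite -addnn; lia.
Qed.

Lemma selected_progression (Xs : seq (set nat)) (P : set nat -> bool) N :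
  exists q0 D, [/\ (N <= q0)%N, (0 < D)%N &
    forall k, {in Xs, forall X, selected X (q0 + k * D) = P X}].
Proof.
have [l inj] := filter_ex (code_inj_near Xs).
pose s := mkseq (fun c => has (fun Y => (code Y l == c) && P Y) Xs) (2 ^ l).
have size_s : size s = 2 ^ l by rewrite size_mkseq.
exists (block_index l s N), (2 ^ (l + size s).+1); split.
- exact: leq_block_index.
- by rewrite expn_gt0.
move=> k X XXs; rewrite -block_indexD selected_block_index ?size_s ?code_lt //.
rewrite nth_mkseq ?code_lt //; apply/hasP/idP => [[Y YXs /andP[/eqP cYX PY]]|PX].
  by rewrite -(inj Y X).
by exists X; rewrite ?eqxx.
Qed.

Lemma trunc_log2_leq p : (trunc_log 2 p <= p)%N.
Proof.
case: p => [|p]; first by rewrite trunc_log0.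
exact/ltnW/(leq_trans (ltn_expl _ (ltnSn 1)))/trunc_logP.
Qed.

Definition generator (T : set (set nat)) (X : set nat) : set nat :=
  [set p | selected X (trunc_log 2 p) != `[< T X >]].

Definition coded_ideal (T : set (set nat)) : set (set nat) := ideal_gen (generator T).

Lemma coded_ideal_gaps T A : coded_ideal T A ->
  exists q0 D, (0 < D)%N /\ forall k p, trunc_log 2 p = q0 + k * D -> ~ A p.
Proof.
move=> [Xs [N AXs]].
have [q0 [D [Nq0 D0 sel]]] := selected_progression Xs (fun X => `[< T X >]) N.
exists q0, D; split => // k p pq Ap.
have Np : (N <= p)%N.
  by apply: leq_trans Nq0 (leq_trans (leq_addr (k * D) _) _); rewrite -pq trunc_log2_leq.
by have [X XXs] := AXs p Np Ap; rewrite /generator /= pq sel // eqxx.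
Qed.

Lemma coded_ideal_proper T : ~ coded_ideal T setT.
Proof.
move=> /coded_ideal_gaps [q0 [D [_ gaps]]].
by apply: (gaps 0 (2 ^ q0)) => //; rewrite mul0n addn0 trunc_expnK.
Qed.

Lemma is_ideal_coded T : is_ideal (coded_ideal T).
Proof. exact/is_ideal_gen/coded_ideal_proper. Qed.

Lemma coded_ideal_incompatible (C : set (set (set nat))) T T' :
  C `<=` is_ideal -> T <> T' -> ~ compatible_in C (coded_ideal T) (coded_ideal T').
Proof.
move=> Cideal /neq_set_asbool [X TX].
apply: (not_compatible_in_cover Cideal (ideal_gen_generator _ X) (ideal_gen_generator _ X)).
apply/seteqP; split => // p _; rewrite /generator /=.
move: TX; case: `[< T X >]; case: `[< T' X >]; case: selected => //= _.
all: first [by left|by right].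
Qed.

Lemma coded_ideal_inj : injective coded_ideal.
Proof.
move=> T T' eTT'; apply: contrapT => /(@coded_ideal_incompatible is_ideal); apply => //.
by exists (coded_ideal T); rewrite -eTT'; split; [exact: is_ideal_coded|split].
Qed.

Definition prefix_agree (x : cantor_space) (K : nat) : set cantor_space :=
  [set z | forall i, (i < K)%N -> z i = x i].

Lemma nbhs_prefix_agree (x : cantor_space) K : nbhs x (prefix_agree x K).
Proof.
elim: K => [|K IH]; first exact: filterS filterT.
have xK : nbhs x [set z : cantor_space | z K = x K].
  by apply: (@proj_continuous nat (fun _ => bool) K x [set x K]); exact: discrete_set1.
apply: filterS (filterI IH xK) => z [zx zK] i.
by rewrite ltnS leq_eqVlt => /predU1P[->|]; [|exact: zx].
Qed.

Lemma nbhs_prefixP (x : cantor_space) U : nbhs x U -> exists K, prefix_agree x K `<=` U.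
Proof.
pose F := filter_from [set: nat] (prefix_agree x).
have Ffilter : Filter F.
  apply: filter_from_filter => [|i j _ _]; first by exists 0.
  exists (maxn i j) => // z zx; split => k kij; apply: zx;
    by apply: leq_trans kij _; rewrite leq_max leqnn ?orbT.
have : F --> (x : {ptws nat -> bool}).
  apply/pointwise_cvgP => t B /= Bxt; exists t.+1 => // z zx.
  by rewrite /= zx //; exact: nbhs_singleton.
by move=> /[apply] -[K _ KU]; exists K.
Qed.

Definition vanishes_on_block (x : cantor_space) (q : nat) : Prop :=
  forall p, trunc_log 2 p = q -> x p = false.

Definition sparse (n : nat) : set cantor_space :=
  [set x | forall j, (n <= j)%N ->
     exists2 q, (j <= q <= j + n)%N & vanishes_on_block x q].

Lemma nowhere_dense_sparse n : nowhere_dense (sparse n).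
Proof.
rewrite /nowhere_dense; apply/seteqP; split => // x /nbhs_prefixP[K Kcl].
(* Points of [sparse n] close to y vanish on a whole block beyond K, where y is true. *)
pose y : cantor_space := fun i => if (i < K)%N then x i else true.
have [z [zS zy]] : sparse n `&` prefix_agree y (2 ^ (maxn n K + n).+1) !=set0.
  by apply: (Kcl y) => [i iK|]; [rewrite /y iK|exact: nbhs_prefix_agree].
have [q /andP[Kq qn] zq] := zS (maxn n K) (leq_maxl n K).
have K2q : (K <= 2 ^ q)%N.
  exact: leq_trans (leq_maxr n K) (leq_trans Kq (ltnW (ltn_expl q (ltnSn 1)))).
have := zq (2 ^ q) (trunc_expnK _ (ltnSn 1)).
by rewrite zy ?ltn_exp2l // /y ltnNge K2q.
Qed.

Lemma sparse_coded_ideal T x : coded_ideal T (set_of_pt x) -> exists n, sparse n x.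
Proof.
move=> /coded_ideal_gaps[q0 [D [D0 gaps]]].
exists (maxn q0 D) => j; rewrite geq_max => /andP[q0j Dj].
exists (q0 + ((j - q0) %/ D).+1 * D).
  have := divn_eq (j - q0) D; have := ltn_pmod (j - q0) D0; have := leq_maxr q0 D.
  by rewrite mulSn; lia.
by move=> p pq; apply/negbTE/negP => xp; exact: gaps _ p pq xp.
Qed.

Lemma meager_coded_ideal T : meager (as_cantor (coded_ideal T)).
Proof.
exists sparse; split; first exact: nowhere_dense_sparse.
by move=> x /sparse_coded_ideal[n xn]; exists n.
Qed.

Section FlattenEnumeration.
Variables (T : eqType) (x0 : T) (C : nat -> seq T).
Hypothesis C_neq0 : forall n, C n != [::].

Definition enum_flatten (m : nat) : T := nth x0 (flatten (mkseq C m.+1)) m.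

Lemma flatten_mkseq_prefix M M' : (M <= M')%N ->
  exists r, flatten (mkseq C M') = flatten (mkseq C M) ++ r.
Proof.
move=> MM'; exists (flatten (map C (iota M (M' - M)))).
by rewrite /mkseq -flatten_cat -map_cat -iotaD subnKC.
Qed.

Lemma size_flatten_mkseq M : (M <= size (flatten (mkseq C M)))%N.
Proof.
elim: M => // M IH; rewrite mkseqS flatten_rcons size_cat.
by have := C_neq0 M; rewrite -size_eq0 -lt0n; lia.
Qed.

Lemma enum_flatten_nth M m : (m < M)%N -> enum_flatten m = nth x0 (flatten (mkseq C M)) m.
Proof.
move=> mM; have [r ->] := flatten_mkseq_prefix mM.
by rewrite nth_cat (leq_trans _ (size_flatten_mkseq m.+1)).
Qed.

Lemma enum_flatten_surj n w : w \in C n -> exists m, enum_flatten m = w.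
Proof.
move=> wC; set L := flatten (mkseq C n.+1).
have wL : w \in L by rewrite /L mkseqS flatten_rcons mem_cat wC orbT.
exists (index w L); rewrite (@enum_flatten_nth (maxn (index w L).+1 n.+1)) ?leq_maxl //.
have [r ->] := flatten_mkseq_prefix (leq_maxr (index w L).+1 n.+1).
by rewrite nth_cat index_mem wL nth_index.
Qed.

Lemma sum_enum_flatten (R : numDomainType) (F : T -> R) M : (forall x, 0 <= F x)%R ->
  (\sum_(m < M) F (enum_flatten m) <= \sum_(n < M) \sum_(x <- C n) F x)%R.
Proof.
move=> F_ge0; set L := flatten (mkseq C M).
have -> : (\sum_(n < M) \sum_(x <- C n) F x = \sum_(x <- L) F x)%R.
  rewrite big_flatten big_map -(big_mkord xpredT (fun n => \sum_(x <- C n) F x)%R).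
  by rewrite /index_iota subn0.
rewrite (big_nth x0) big_mkord.
rewrite (big_ord_widen _ (fun m => F (enum_flatten m)) (size_flatten_mkseq M)) big_mkcond.
apply: ler_sum => m _; case: ifP => // mM.
by rewrite (@enum_flatten_nth M).
Qed.

End FlattenEnumeration.

Definition block_cover (q : nat) : seq (seq bool) :=
  [seq tval t ++ nseq (2 ^ q) false | t : (2 ^ q).-tuple bool].

Lemma block_cover_neq0 q : block_cover q != [::].
Proof. by rewrite -size_eq0 size_map -cardE card_tuple card_bool expn_eq0. Qed.

Lemma block_cover_cylinder q x : vanishes_on_block x q ->
  exists2 w, w \in block_cover q & cylinder w x.
Proof.
move=> xq; have sz : size (mkseq x (2 ^ q)) == 2 ^ q by rewrite size_mkseq.
exists (mkseq x (2 ^ q) ++ nseq (2 ^ q) false).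
  by apply/mapP; exists (Tuple sz); rewrite ?mem_enum.
move=> i; rewrite size_cat size_mkseq size_nseq nth_cat size_mkseq => i2q.
case: ifP => [iq|/negbT]; first by rewrite nth_mkseq.
rewrite -leqNgt nth_nseq if_same => qi; apply: xq; apply: trunc_log_eq => //.
by rewrite qi expnS mul2n -addnn.
Qed.

Section CylinderCovers.
Local Open Scope ring_scope.

Definition mass (w : seq bool) : rat := (2%:R : rat) ^- size w.

Lemma null_set_of_covers (A : set cantor_space) :
  (forall k, exists C : nat -> seq (seq bool), [/\ forall n, C n != [::],
     A `<=` \bigcup_n [set x | exists2 w, w \in C n & cylinder w x] &
     forall N, \sum_(n < N) \sum_(w <- C n) mass w <= (k.+1%:R)^-1]) ->
  null_set A.
Proof.
move=> covers k; have [C [C_neq0 AC Cmass]] := covers k.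
exists (enum_flatten [::] C); split.
  move=> x /AC[n _ [w wC wx]].
  by have [m em] := enum_flatten_surj [::] C_neq0 wC; exists m; rewrite ?em.
move=> N; apply: le_trans (Cmass N); apply: sum_enum_flatten => // w.
by rewrite /mass invr_ge0 exprn_ge0.
Qed.

Lemma mass_block_cover q : \sum_(w <- block_cover q) mass w = 2%:R ^- (2 ^ q)%N.
Proof.
rewrite big_map big_enum /=.
under eq_bigr do rewrite /mass size_cat size_nseq size_tuple.
rewrite sumr_const card_tuple card_bool -(mulr_natr _ (2 ^ 2 ^ q)) natrX exprD.
by field; rewrite expf_neq0 // pnatr_eq0.
Qed.

Lemma sum_half_powers N : \sum_(n < N) (2%:R^-1 : rat) ^+ n.+1 = 1 - 2%:R^-1 ^+ N.
Proof.
elim: N => [|N IH]; first by rewrite big_ord0 expr0 subrr.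
by rewrite big_ord_recr /= IH !exprS; field.
Qed.

Lemma sum_inv_exp2_exp2 k N :
  \sum_(n < N) (2%:R : rat) ^- (2 ^ (k + n))%N <= (k.+1%:R)^-1.
Proof.
have h_ge0 : 0 <= (2%:R^-1 : rat) by rewrite invr_ge0 ler0n.
have h_le1 : (2%:R^-1 : rat) <= 1 by rewrite invf_le1 ?ler1n ?ltr0n.
apply: (@le_trans _ _ (\sum_(n < N) 2%:R^-1 ^+ k * 2%:R^-1 ^+ n.+1)).
  apply: ler_sum => n _; rewrite -exprVn -exprD; apply: ler_wiXn2l => //.
  by rewrite addnS; exact: ltn_expl.
rewrite -mulr_sumr sum_half_powers; apply: (@le_trans _ _ (2%:R^-1 ^+ k)).
  by rewrite ler_piMr ?exprn_ge0 // gerBl exprn_ge0.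
rewrite exprVn lef_pV2 ?posrE ?exprn_gt0 ?ltr0n // -natrX ler_nat.
exact: ltn_expl.
Qed.

End CylinderCovers.

Lemma coded_ideal_vanishes T x k : coded_ideal T (set_of_pt x) ->
  exists2 q, (k <= q)%N & vanishes_on_block x q.
Proof.
move=> /sparse_coded_ideal[n xn]; have [q /andP[nkq _] xq] := xn (maxn n k) (leq_maxl n k).
by exists q => //; exact: leq_trans (leq_maxr n k) nkq.
Qed.

Lemma null_coded_ideal T : null_set (as_cantor (coded_ideal T)).
Proof.
apply: null_set_of_covers => k; exists (fun n => block_cover (k + n)); split.
- by move=> n; exact: block_cover_neq0.
- move=> x /(coded_ideal_vanishes k)[q kq xq]; exists (q - k) => //.
  by rewrite subnKC //; exact: block_cover_cylinder.
- move=> N; under eq_bigr do rewrite mass_block_cover; exact: sum_inv_exp2_exp2.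
Qed.

Lemma not_inj_powerset (T : Type) (f : set T -> T) : ~ injective f.
Proof.
move=> finj; pose D := [set x | exists2 S, f S = x & ~ S x].
have [DfD|nDfD] := pselect (D (f D)).
  by case: (DfD) => S /finj eSD; rewrite eSD; apply.
by apply: (nDfD); exists D.
Qed.

Lemma not_BT_of_antichain (C : set (set (set nat))) (g : set (set nat) -> set (set nat)) :
  (forall T, C (g T)) -> (forall T T', T <> T' -> ~ compatible_in C (g T) (g T')) ->
  ~ BT_property C.
Proof.
move=> Cg g_incompat [D [DC dense _ _ /pcard_injP[h hinj]]].
have /choice[d dP] : forall T, exists d, D d /\ g T `<=` d.
  by move=> T; have [d] := dense _ (Cg T); exists d.
apply: (@not_inj_powerset _ (h \o d)) => T T' /hinj eTT'.
have {}eTT' : d T = d T' by apply: eTT'; rewrite inE; [exact: (dP T).1|exact: (dP T').1].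
apply: contrapT => /g_incompat; apply; exists (d T); split; first exact/DC/(dP T).1.
by split; [exact: (dP T).2|rewrite eTT'; exact: (dP T').2].
Qed.

Local Open Scope card_scope.

Theorem mainTheorem9 :
  (exists F : set (set (set nat)),
     F #= [set: set (set nat)] /\
     (forall I, F I -> meager_ideals I /\ null_ideals I) /\
     (forall I J, F I -> F J -> I <> J ->
        ~ compatible_in meager_ideals I J /\ ~ compatible_in null_ideals I J))
  /\ ~ BT_property meager_ideals /\ ~ BT_property null_ideals.
Proof.
have meager_coded T : meager_ideals (coded_ideal T).
  by split; [exact: is_ideal_coded|exact: meager_coded_ideal].
have null_coded T : null_ideals (coded_ideal T).
  by split; [exact: is_ideal_coded|exact: null_coded_ideal].
have meager_ideal : meager_ideals `<=` is_ideal by move=> K [].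
have null_ideal : null_ideals `<=` is_ideal by move=> K [].
split; [|split].
- exists (range coded_ideal); split; first exact/inj_card_eq/(in2W coded_ideal_inj).
  split; first by move=> I [T _ <-].
  move=> I J [T _ <-] [T' _ <-] TT'; have {}TT' : T <> T' by move=> eT; rewrite eT in TT'.
  by split; [exact: coded_ideal_incompatible meager_ideal TT'|
              exact: coded_ideal_incompatible null_ideal TT'].
- apply: (not_BT_of_antichain meager_coded) => T T'.
  exact: coded_ideal_incompatible meager_ideal.
- apply: (not_BT_of_antichain null_coded) => T T'.
  exact: coded_ideal_incompatible null_ideal.
Qed.
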